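(* There exist infinitely many positive integers $n$ such that for each such $n$ there is a graph $G$ with exactly $\binom{2n}{2}$ edges with the property that for every bipartition $V_1,V_2$ of $V(G)$, $\max\{e(V_1),e(V_2)\}\ge \binom{n}{2}+\frac{5n}{48}$.
   Context: For a bipartition $V_1,V_2$ of $V(G)$, $e(V_i)$ denotes the number of edges of $G$ with both ends in $V_i$. *)

From mathcomp Require Import all_boot all_order all_algebra.
Set Implicit Arguments. Unset Strict Implicit. Unset Printing Implicit Defensive.

Definition simple_graph (T : finType) (e : rel T) : Prop :=
  symmetric e /\ irreflexive e.

Definition edges (T : finType) (e : rel T) : {set {set T}} :=
  [set E : {set T} | [exists x : T, exists y : T, (E == [set x; y]) && e x y]].

Definition e_in (T : finType) (e : rel T) (A : {set T}) : nat :=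
  #|[set E in edges e | E \subset A]|.

(* Take G = K_(2n-1) + K_(4k+2) with n = 4k^2 + 3k + 1; this n makes
   C(4k+2, 2) = 2n - 1, so G has C(2n-1, 2) + (2n-1) = C(2n, 2) edges.
   A bipartition splits the large clique as x + x' = 2n - 1 and the small one
   as y + y' = 4k + 2.  If x or x' is at least n + 1 that side alone spans
   C(n, 2) + n edges.  Otherwise {x, x'} = {n, n - 1}, and both sides falling
   short of the bound would force 48 C(y, 2) < 5n and 48 C(y', 2) + 48 < 53n;
   three times the first plus the second contradicts y + y' = 4k + 2 once
   (3(2y-1) - (2y'-1))^2 >= 0 and k >= 5. *)
From mathcomp Require Import all_boot all_order all_algebra zify.
Import GRing.Theory Num.Theory.

Set Implicit Arguments.
Unset Strict Implicit.
Unset Printing Implicit Defensive.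

Lemma e_in_setT (T : finType) (e : rel T) : e_in e setT = #|edges e|.
Proof. by apply: eq_card => E; rewrite inE subsetT andbT. Qed.

Section TwoCliques.

Variables (T : finType) (L : {set T}).

Definition two_cliques : rel T := fun x y => (x != y) && ((x \in L) == (y \in L)).

Lemma two_cliques_simple : simple_graph two_cliques.
Proof.
split=> [x y | x]; rewrite /two_cliques ?eqxx //.
by rewrite [y == x]eq_sym [(y \in L) == _]eq_sym.
Qed.

Lemma mem_edges_two_cliques E :
  (E \in edges two_cliques) = (#|E| == 2) && ((E \subset L) || (E \subset ~: L)).
Proof.
rewrite inE; apply/existsP/idP.
- case=> x /existsP [y /andP [/eqP -> /andP [nxy /eqP sameL]]].
  rewrite cards2 nxy /= !subUset !sub1set !inE sameL.
  by case: (y \in L).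
- case/andP => /cards2P [x [y [nxy ->]]].
  rewrite !subUset !sub1set !inE => inside.
  exists x; apply/existsP; exists y; rewrite eqxx /two_cliques nxy /=.
  by move: inside; case: (x \in L); case: (y \in L).
Qed.

Lemma e_in_two_cliques A :
  e_in two_cliques A = 'C(#|A :&: L|, 2) + 'C(#|A :&: ~: L|, 2).
Proof.
rewrite /e_in -!cards_draws.
set S1 := [set E : {set T} | _ & _]; set S2 := [set E : {set T} | _ & _].
have -> : [set E in edges two_cliques | E \subset A] = S1 :|: S2.
  apply/setP => E; rewrite [in LHS]inE mem_edges_two_cliques !inE !subsetI.
  by case: (E \subset A); case: (#|E| == 2); case: (E \subset L); case: (E \subset ~: L).
rewrite cardsU; suff -> : S1 :&: S2 = set0 by rewrite cards0 subn0.
apply/setP => E; rewrite !inE !subsetI.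
apply/negP => /andP [/andP [/andP [_ sEL] /eqP cardE] /andP [/andP [_ sELC] _]].
have : E \subset L :&: ~: L by rewrite subsetI sEL sELC.
by rewrite setICr subset0 => /eqP E0; rewrite E0 cards0 in cardE.
Qed.

End TwoCliques.

Lemma card_inl_setT (a t : nat) : #|inl @: [set: 'I_a] : {set 'I_a + 'I_t}| = a.
Proof. by rewrite card_imset ?cardsT ?card_ord //; apply: inl_inj. Qed.

Lemma card_setC_inl (a t : nat) : #|~: (inl @: [set: 'I_a]) : {set 'I_a + 'I_t}| = t.
Proof.
have := cardsC (inl @: [set: 'I_a] : {set 'I_a + 'I_t}).
by rewrite card_inl_setT card_sum !card_ord => /addnI.
Qed.

Lemma bin2_mul2 u : 'C(u, 2) * 2 + u = u * u.
Proof.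
case: u => [|u] //; rewrite -[2]/(2`!) bin_ffact /= ffactnS ffactn1.
by rewrite -mulnSr.
Qed.

Section CliqueSizes.

Variables k n : nat.
Hypothesis n_def : n = 4 * k * k + 3 * k + 1.

Lemma bin2_4k2 : 'C(4 * k + 2, 2) = 2 * n - 1.
Proof. have := bin2_mul2 (4 * k + 2); nia. Qed.

Hypothesis k_ge5 : 5 <= k.

Lemma small_clique_split u v : u + v = 4 * k + 2 ->
  5 * n <= 48 * 'C(u, 2) \/ 53 * n <= 48 * 'C(v, 2) + 48.
Proof.
move=> uv.
have := bin2_mul2 u; have := bin2_mul2 v.
have sq : (0 <= (3 * (2 * u%:Z - 1) - (2 * v%:Z - 1)) ^+ 2)%R by rewrite sqr_ge0.
have uv2 : (u + v) * (u + v) = (4 * k + 2) * (4 * k + 2) by rewrite uv.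
have k2 : 5 * k <= k * k by rewrite leq_mul2r k_ge5 orbT.
rewrite expr2 in sq; lia.
Qed.

Lemma bipartition_two_cliques_bound x x' y y' :
  x + x' = 2 * n - 1 -> y + y' = 4 * k + 2 ->
  48 * 'C(n, 2) + 5 * n <= 48 * maxn ('C(x, 2) + 'C(y, 2)) ('C(x', 2) + 'C(y', 2)).
Proof.
move=> xx' yy'.
have n_gt0 : 0 < n by rewrite n_def addn1.
have binSn : 'C(n.+1, 2) = 'C(n, 2) + n by rewrite binS bin1.
have binn : 'C(n, 2) = 'C(n.-1, 2) + n.-1 by rewrite -{1}(prednK n_gt0) binS bin1 addnC.
rewrite maxnMr leq_max.
have [big_x | x_le] := leqP n.+1 x.
  by have := leq_bin2l 2 big_x; rewrite binSn; lia.
have [big_x' | x'_le] := leqP n.+1 x'.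
  by have := leq_bin2l 2 big_x'; rewrite binSn; lia.
have [[-> ->] | [-> ->]] : (x = n /\ x' = n.-1) \/ (x = n.-1 /\ x' = n) by lia.
- by case: (small_clique_split yy'); lia.
- by rewrite addnC in yy'; case: (small_clique_split yy'); lia.
Qed.

End CliqueSizes.

Local Open Scope ring_scope.

Lemma ler_nat_add_divn (R : numFieldType) (c a d m : nat) : (0 < d)%N ->
  (d * c + a <= d * m)%N -> c%:R + a%:R / d%:R <= m%:R :> R.
Proof.
move=> d_gt0 le_d; have pos_d : 0 < d%:R :> R by rewrite ltr0n.
rewrite -(ler_pM2l pos_d) mulrDr mulrCA divff ?mulr1; last by rewrite pnatr_eq0 -lt0n.
by rewrite -!natrM -natrD ler_nat.
Qed.

Theorem theorem1p4 :
  forall N : nat, exists n : nat, (N < n)%N /\ (0 < n)%N /\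
    exists (T : finType) (e : rel T),
      simple_graph e /\
      #|edges e| = 'C(2 * n, 2) /\
      forall V1 : {set T},
        ('C(n, 2)%:R + (5 * n)%:R / 48%:R : rat)
          <= (maxn (e_in e V1) (e_in e (~: V1)))%:R.
Proof.
move=> N; pose k := (N + 5)%N; pose n := (4 * k * k + 3 * k + 1)%N.
have n_def : n = (4 * k * k + 3 * k + 1)%N by [].
have k_ge5 : (5 <= k)%N by rewrite /k; lia.
exists n; split; first by rewrite n_def /k; lia.
split; first by rewrite n_def addn1.
pose L : {set 'I_(2 * n - 1) + 'I_(4 * k + 2)} := inl @: setT.
exists _, (two_cliques L); split; first exact: two_cliques_simple.
split.
  rewrite -e_in_setT e_in_two_cliques !setTI card_inl_setT card_setC_inl.
  rewrite (bin2_4k2 n_def) subn1 -[X in (_ + X)%N]bin1 -binS prednK //.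
  by rewrite n_def; lia.
move=> V1; apply: ler_nat_add_divn => //; rewrite !e_in_two_cliques.
have split_card B : (#|V1 :&: B| + #|~: V1 :&: B| = #|B|)%N.
  by rewrite -(cardsID V1 B) setDE !(setIC B).
apply: (bipartition_two_cliques_bound n_def k_ge5).
  by rewrite split_card card_inl_setT.
by rewrite split_card card_setC_inl.
Qed.
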